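(* Let $A\in\mathbb{Z}^{d\times n}$, $\mathbf{b}\in\mathbb{Z}^d$, $\mathbf{c}\in\mathbb{Z}^n$, $\mathbf{u}\in\mathbb{Z}_{\ge0}^n$, and consider the LP $\min\{\mathbf{c}^\top\mathbf{x} : A\mathbf{x}=\mathbf{b},\ \mathbf{0}\le\mathbf{x}\le\mathbf{u},\ \mathbf{x}\in\mathbb{R}^n\}$. Let $m$ be the number of distinct positive values of $-\mathbf{c}^\top\mathbf{z}/\|\mathbf{z}\|_1$ as $\mathbf{z}$ ranges over $\mathcal{C}(A)$. Then from any feasible solution, every sequence of discrete steepest-descent augmentations reaches an optimal solution after at most $n\cdot m$ augmentations.
   Context: The circuits $\mathcal{C}(A)$: for each nonzero $\mathbf{z}\in\ker(A)$ with inclusion-minimal support among nonzero vectors of $\ker(A)$, the line $\mathbb{R}\mathbf{z}$ contains exactly two nonzero integer points closest to the origin; $\mathcal{C}(A)$ is the set of all these vectors. Discrete steepest-descent augmentation (LP): given a feasible $\mathbf{x}_k$, choose $\mathbf{z}\in\mathcal{C}(A)$ maximizing $-\mathbf{c}^\top\mathbf{z}/\|\mathbf{z}\|_1$ among all $\mathbf{z}\in\mathcal{C}(A)$ such that $\mathbf{x}_k+\epsilon\mathbf{z}$ is feasible for some $\epsilon>0$; if this maximum is positive, let $\alpha$ be the largest real number with $\mathbf{x}_k+\alpha\mathbf{z}$ feasible and set $\mathbf{x}_{k+1}:=\mathbf{x}_k+\alpha\mathbf{z}$, otherwise stop. *)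

From HB Require Import structures.
From mathcomp Require Import all_boot all_order all_algebra.
Set Implicit Arguments. Unset Strict Implicit. Unset Printing Implicit Defensive.
Import Order.TTheory GRing.Theory Num.Theory.
Local Open Scope ring_scope.

Section LP.
Variables (R : realFieldType) (d n : nat).

Definition intmx (A : 'M[int]_(d, n)) : 'M[R]_(d, n) := map_mx (fun a => a%:~R) A.
Definition intcv (k : nat) (v : 'cV[int]_k) : 'cV[R]_k := map_mx (fun a => a%:~R) v.

Definition dotc (c : 'cV[int]_n) (x : 'cV[R]_n) : R := \sum_(i < n) (c i 0)%:~R * x i 0.
Definition norm1 (x : 'cV[R]_n) : R := \sum_(i < n) `|x i 0|.

Definition feasible (A : 'M[int]_(d, n)) (b : 'cV[int]_d) (u : 'cV[int]_n)
  (x : 'cV[R]_n) : Prop :=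
  intmx A *m x = intcv b /\ forall i : 'I_n, 0 <= x i 0 <= (u i 0)%:~R.

Definition optimal A b (c u : 'cV[int]_n) (x : 'cV[R]_n) : Prop :=
  feasible A b u x /\ forall y, feasible A b u y -> dotc c x <= dotc c y.

(* circuits: integer kernel vectors of inclusion-minimal support among the
   nonzero (real) kernel vectors, closest to the origin among the nonzero
   integer points of their line *)
Definition is_circuit (A : 'M[int]_(d, n)) (z : 'cV[int]_n) : Prop :=
  [/\ intmx A *m intcv z = 0, z != 0,
      (forall w : 'cV[R]_n, intmx A *m w = 0 -> w != 0 ->
         (forall i, w i 0 != 0 -> z i 0 != 0) ->
         (forall i, z i 0 != 0 -> w i 0 != 0)) &
      (forall (w : 'cV[int]_n) (t : R), w != 0 ->
         intcv w = t *: intcv z -> 1 <= `|t|)].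

Definition sd_ratio (c z : 'cV[int]_n) : R := - dotc c (intcv z) / norm1 (intcv z).

Definition feas_dir A b u (x : 'cV[R]_n) (z : 'cV[int]_n) : Prop :=
  exists eps : R, 0 < eps /\ feasible A b u (x + eps *: intcv z).

Definition sd_step A b (c u : 'cV[int]_n) (x x' : 'cV[R]_n) : Prop :=
  exists z : 'cV[int]_n,
  [/\ is_circuit A z, feas_dir A b u x z,
      (forall z', is_circuit A z' -> feas_dir A b u x z' -> sd_ratio c z' <= sd_ratio c z),
      0 < sd_ratio c z &
      exists alpha : R,
        [/\ feasible A b u (x + alpha *: intcv z),
            (forall beta, feasible A b u (x + beta *: intcv z) -> beta <= alpha) &
            x' = x + alpha *: intcv z]].

Definition sd_stops A b (c u : 'cV[int]_n) (x : 'cV[R]_n) : Prop :=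
  forall z, is_circuit A z -> feas_dir A b u x z -> sd_ratio c z <= 0.

End LP.

From HB Require Import structures.
From mathcomp Require Import all_boot all_order all_algebra.
From mathcomp Require Import ring lra.
From Stdlib Require Classical_Prop IndefiniteDescription Wf_nat.
Set Implicit Arguments. Unset Strict Implicit. Unset Printing Implicit Defensive.
Import Order.TTheory GRing.Theory Num.Theory.
Local Open Scope ring_scope.

(* Along the run the steepest-descent ratios never increase.  If every circuit
   direction feasible at x has ratio at most r, then -c^T (y - x) <= r |y - x|_1
   for every feasible y: decompose y - x conformally into circuits, whose ratios
   average (as mediants) to that of y - x, and note that each piece is itself a
   feasible direction at x.  While the ratio stays equal to r, this inequality is
   tight for the concatenation of the steps taken, so these steps are
   coordinatewise sign-compatible; a coordinate pushed to one of its bounds by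
   one step therefore never moves again.  So each of the m positive ratios is
   taken by at most n steps.  With r = 0 the same inequality gives optimality
   when the method stops. *)

Lemma ex_minn_classic (P : nat -> Prop) :
  (exists k, P k) -> exists k, P k /\ forall k', P k' -> (k <= k')%N.
Proof.
move=> exP; have [k [[Pk kmin] _]] :=
  Wf_nat.dec_inh_nat_subset_has_unique_least_element P
    (fun k => Classical_Prop.classic (P k)) exP.
by exists k; split=> // k' /kmin /ssrnat.leP.
Qed.

Lemma mediant_le (R : realFieldType) (a b p q : R) : 0 < p -> 0 < q ->
  (a + b) / (p + q) <= a / p \/ (a + b) / (p + q) <= b / q.
Proof.
move=> p_gt0 q_gt0; have pq_gt0 : 0 < p + q by rewrite addr_gt0.
case: (lerP ((a + b) / (p + q)) (a / p)) => [|lt]; [by left | right].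
have er : a + b = (a + b) / (p + q) * (p + q) by rewrite divfK // gt_eqF.
move: lt er; set r := (a + b) / (p + q).
rewrite ltr_pdivrMr // ler_pdivlMr //; nra.
Qed.

Section Norm1.
Variables (R : realFieldType) (n : nat).
Implicit Types (v w g h : 'cV[R]_n) (c : 'cV[int]_n).

Lemma dotcD c v w : dotc c (v + w) = dotc c v + dotc c w.
Proof. by rewrite /dotc -big_split /=; apply: eq_bigr => i _; rewrite mxE mulrDr. Qed.

Lemma dotcZ c (a : R) v : dotc c (a *: v) = a * dotc c v.
Proof. by rewrite /dotc mulr_sumr; apply: eq_bigr => i _; rewrite mxE mulrCA. Qed.

Lemma dotc0 c : dotc c (0 : 'cV[R]_n) = 0.
Proof. by rewrite -(scale0r (0 : 'cV[R]_n)) dotcZ mul0r. Qed.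

Lemma dotcB c v w : dotc c (v - w) = dotc c v - dotc c w.
Proof. by rewrite dotcD -scaleN1r dotcZ mulN1r. Qed.

Lemma dotc_sum c (s : seq 'cV[R]_n) :
  dotc c (\sum_(v <- s) v) = \sum_(v <- s) dotc c v.
Proof. by apply: big_morph; [apply: dotcD | apply: dotc0]. Qed.

Lemma norm1_ge0 v : 0 <= norm1 v.
Proof. exact: sumr_ge0. Qed.

Lemma norm1_0 : norm1 (0 : 'cV[R]_n) = 0.
Proof. by rewrite /norm1 big1 // => i _; rewrite mxE normr0. Qed.

Lemma norm1Z (a : R) v : norm1 (a *: v) = `|a| * norm1 v.
Proof. by rewrite /norm1 mulr_sumr; apply: eq_bigr => i _; rewrite mxE normrM. Qed.

Lemma norm1_gt0 v : v != 0 -> 0 < norm1 v.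
Proof.
move=> /cV0Pn [i vi]; rewrite lt_def norm1_ge0 andbT; apply: contra vi.
move=> /eqP/psumr_eq0P/(_ i isT) => vi0.
by rewrite -normr_eq0 vi0 // => j _; apply: normr_ge0.
Qed.

Lemma norm1D v w : norm1 (v + w) <= norm1 v + norm1 w.
Proof. by rewrite /norm1 -big_split /=; apply: ler_sum => i _; rewrite mxE ler_normD. Qed.

Definition conf_le g h := forall i : 'I_n,
  (0 <= g i 0 <= h i 0) \/ (h i 0 <= g i 0 <= 0).

Lemma conf_le_trans g g' h : conf_le g g' -> conf_le g' h -> conf_le g h.
Proof.
move=> gg' g'h i; case: (gg' i) => /andP [? ?]; case: (g'h i) => /andP [? ?];
  by first [left; apply/andP; split; lra | right; apply/andP; split; lra].
Qed.

Lemma conf_le_subr g h : conf_le g h -> conf_le (h - g) h.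
Proof.
by move=> gh i; rewrite !mxE; case: (gh i) => /andP [? ?]; [left | right];
  apply/andP; split; lra.
Qed.

Lemma conf_le_norm1 g h : conf_le g h -> norm1 h = norm1 g + norm1 (h - g).
Proof.
move=> gh; rewrite /norm1 -big_split /=; apply: eq_bigr => i _; rewrite !mxE.
case: (gh i) => /andP [g1 g2].
  by rewrite !ger0_norm ?subr_ge0 ?(le_trans g1 g2) //; lra.
by rewrite !ler0_norm ?subr_le0 ?(le_trans g1 g2) //; lra.
Qed.

Definition descent_ratio c v := - dotc c v / norm1 v.

Lemma descent_ratioZ c (a : R) v : 0 < a -> descent_ratio c (a *: v) = descent_ratio c v.
Proof.
move=> a_gt0; rewrite /descent_ratio dotcZ norm1Z gtr0_norm //.
have [->|v0] := eqVneq (norm1 v) 0; first by rewrite mulr0 !invr0 !mulr0.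
by field; rewrite v0 gt_eqF.
Qed.

Lemma descent_ratioP c v : v != 0 -> - dotc c v = descent_ratio c v * norm1 v.
Proof. by move=> /norm1_gt0 v_gt0; rewrite /descent_ratio divfK ?gt_eqF. Qed.

Lemma descent_ratio_split c g h : conf_le g h -> g != 0 -> h - g != 0 ->
  descent_ratio c h <= descent_ratio c g \/ descent_ratio c h <= descent_ratio c (h - g).
Proof.
move=> gh g0 hg0; have -> : descent_ratio c h =
    (- dotc c g + - dotc c (h - g)) / (norm1 g + norm1 (h - g)).
  by rewrite -conf_le_norm1 // -opprD -dotcD addrC subrK.
by apply: mediant_le; apply: norm1_gt0.
Qed.

End Norm1.

Section TightSums.
Variables (R : realFieldType) (n : nat).

Lemma psumr_le0_eq0 (I : eqType) (s : seq I) (F : I -> R) :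
  (forall j, j \in s -> 0 <= F j) -> \sum_(j <- s) F j <= 0 ->
  forall j, j \in s -> F j = 0.
Proof.
move=> F_ge0 S_le0 j js.
have : \sum_(j <- s | j \in s) F j == 0.
  by rewrite -big_seq eq_le S_le0 big_seq sumr_ge0.
by rewrite psumr_eq0 // => /allP/(_ j js)/implyP/(_ js)/eqP.
Qed.

Lemma sum_norm_tight_sign (I : eqType) (s : seq I) (F : I -> R) :
  \sum_(j <- s) `|F j| <= `|\sum_(j <- s) F j| ->
  forall a b, a \in s -> b \in s -> 0 <= F a * F b.
Proof.
wlog S_ge0 : F / 0 <= \sum_(j <- s) F j => [wlogF|tight].
  have [|S_lt0] := lerP 0 (\sum_(j <- s) F j); first exact: wlogF.
  move=> tight a b; rewrite -mulrNN; apply: (wlogF (fun j => - F j)).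
    by rewrite sumrN oppr_ge0 ltW.
  by rewrite sumrN normrN; under eq_bigr do rewrite normrN.
have normF : forall j, j \in s -> `|F j| - F j = 0.
  apply: psumr_le0_eq0 => [j _|]; first by rewrite subr_ge0 ler_norm.
  by rewrite sumrB subr_le0 (le_trans tight) // ger0_norm.
have F_ge0 j : j \in s -> 0 <= F j by move=> /normF /eqP; rewrite subr_eq0 => /eqP <-.
by move=> a b /F_ge0 ? /F_ge0 ?; apply: mulr_ge0.
Qed.

Lemma norm1_sum_tight (s : seq 'cV[R]_n) :
  \sum_(v <- s) norm1 v <= norm1 (\sum_(v <- s) v) ->
  forall i v w, v \in s -> w \in s -> 0 <= v i 0 * w i 0.
Proof.
move=> tight i; suff tight_i : \sum_(v <- s) `|v i 0| <= `|\sum_(v <- s) v i 0|.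
  by move=> v w; apply: (sum_norm_tight_sign tight_i).
pose gap l := \sum_(v <- s) `|v l 0| - `|\sum_(v <- s) v l 0|.
have gap_ge0 l : 0 <= gap l by rewrite subr_ge0 ler_norm_sum.
have : \sum_(l < n) gap l = 0.
  apply/eqP; rewrite eq_le sumr_ge0 ?andbT // sumrB subr_le0 exchange_big /=.
  apply: (le_trans tight); rewrite le_eqVlt; apply/orP; left; apply/eqP.
  by apply: eq_bigr => l _; rewrite summxE.
move/psumr_eq0P => /(_ (fun l _ => gap_ge0 l) i isT) /eqP.
by rewrite subr_eq0 => /eqP ->.
Qed.

End TightSums.

Lemma intcv_eq0 (R : realFieldType) (k : nat) (z : 'cV[int]_k) :
  (intcv R z == 0) = (z == 0).
Proof.
apply/eqP/eqP => [z0|->]; last by apply/matrixP => i j; rewrite !mxE.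
apply/matrixP => i j; move/matrixP: z0 => /(_ i j).
by rewrite !mxE => /eqP; rewrite intr_eq0 => /eqP.
Qed.

Lemma intcvN (R : realFieldType) (k : nat) (z : 'cV[int]_k) : intcv R (- z) = - intcv R z.
Proof. by apply/matrixP => i j; rewrite !mxE intrN. Qed.

Lemma rat_kernel_vector (R : realFieldType) (p q : nat) (M : 'M[rat]_(p, q)) (g : 'cV[R]_q) :
  map_mx ratr M *m g = 0 -> g != 0 -> exists2 r : 'cV[rat]_q, r != 0 & M *m r = 0.
Proof.
move=> Mg g0; have : ~~ row_free (map_mx (@ratr R) M)^T.
  rewrite -kermx_eq0; apply: contraNneq g0 => K0; rewrite -trmx_eq0 -submx0 -K0.
  by apply/sub_kermxP; rewrite -trmx_mul Mg trmx0.
have -> : row_free (map_mx (@ratr R) M)^T = row_free M^T.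
  by rewrite map_trmx /row_free mxrank_map.
rewrite -kermx_eq0.
case/matrix0Pn => i [j Kij]; exists (row i (kermx M^T))^T.
  by apply/cV0Pn; exists j; rewrite mxE mxE.
have : row i (kermx M^T) *m M^T = 0 by apply/sub_kermxP; apply: row_sub.
by move/(congr1 trmx); rewrite trmx_mul trmxK trmx0.
Qed.

Lemma rat_cV_int_multiple (n : nat) (q : 'cV[rat]_n) :
  exists z : 'cV[int]_n, exists2 D : int, 0 < D & forall i, (z i 0)%:~R = D%:~R * q i 0 :> rat.
Proof.
pose D := \prod_(i < n) denq (q i 0).
pose z : 'cV[int]_n := \col_i (numq (q i 0) * \prod_(j < n | j != i) denq (q j 0)).
exists z, D.
  by apply: prodr_gt0 => j _; exact: denq_gt0.
by move=> i; rewrite mxE rmorphM /= numqE /D [in RHS](bigD1 i) //= rmorphM /=; ring.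
Qed.

Section Circuits.
Variables (R : realFieldType) (d n : nat) (A : 'M[int]_(d, n)).
Implicit Types (v w g h : 'cV[R]_n).

Definition kerv v := intmx R A *m v = 0.
Definition supp v := [pred i : 'I_n | v i 0 != 0].
Definition min_support g := forall w, kerv w -> w != 0 ->
  {subset supp w <= supp g} -> {subset supp g <= supp w}.

Lemma kervZ (a : R) v : kerv v -> kerv (a *: v).
Proof. by rewrite /kerv -scalemxAr => ->; rewrite scaler0. Qed.

Lemma kervN v : kerv v -> kerv (- v).
Proof. by rewrite /kerv mulmxN => ->; rewrite oppr0. Qed.

Lemma kervB v w : kerv v -> kerv w -> kerv (v - w).
Proof. by rewrite /kerv mulmxBr => -> ->; rewrite subrr. Qed.

Lemma min_support_multiple g w : kerv g -> g != 0 -> min_support g ->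
  kerv w -> {subset supp w <= supp g} -> exists t, w = t *: g.
Proof.
move=> kg /cV0Pn [i0 gi0] ming kw sub_wg; exists (w i0 0 / g i0 0).
apply/eqP; rewrite -subr_eq0; apply/negP => /negP v0.
have : i0 \in supp (w - (w i0 0 / g i0 0) *: g).
  apply: (ming _ _ v0); last by rewrite inE.
    by apply: kervB => //; apply: kervZ.
  move=> i; rewrite !inE !mxE; apply: contraNneq => gi.
  have /negbNE/eqP -> : ~~ (i \in supp w) by apply/negP => /sub_wg; rewrite inE gi eqxx.
  by rewrite gi mulr0 subrr.
by rewrite !inE !mxE divfK // subrr eqxx.
Qed.

Lemma min_support_int_multiple g : kerv g -> g != 0 -> min_support g ->
  exists z : 'cV[int]_n, exists2 s : R, s != 0 & intcv R z = s *: g.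
Proof.
move=> kg g0 ming.
pose M := col_mx (map_mx (fun a : int => a%:~R : rat) A)
                 (diag_mx (\row_i (if g i 0 == 0 then 1 else 0))).
(* [M] cuts out the kernel vectors of [A] supported inside [supp g]; being
   rational, it has a rational kernel vector, which is a multiple of [g]. *)
have ratrM : map_mx (@ratr R) M = col_mx (intmx R A)
               (diag_mx (\row_i (if g i 0 == 0 then 1 else 0))).
  rewrite map_col_mx; congr col_mx; apply/matrixP => i j; rewrite !mxE.
    by rewrite ratr_int.
  by case: (i == j); case: (g i 0 == 0); rewrite ?rmorph0 ?rmorph1.
have [r r0 Mr] : exists2 r : 'cV[rat]_n, r != 0 & M *m r = 0.
  apply: (rat_kernel_vector (g := g) _ g0); rewrite ratrM mul_col_mx kg mul_diag_mx.
  apply/eqP; rewrite col_mx_eq0 eqxx /=; apply/eqP/matrixP => i j.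
  by rewrite (ord1 j) !mxE; case: eqP => [->|_]; rewrite ?mulr0 ?mul0r.
have /eqP := congr1 (map_mx (@ratr R)) Mr.
rewrite map_mxM map_mx0 ratrM mul_col_mx col_mx_eq0 => /andP [/eqP kr /eqP Dr].
have [t rt] : exists t, map_mx (@ratr R) r = t *: g.
  apply: min_support_multiple => // i; rewrite !inE; apply: contraNneq => gi.
  by move/matrixP: Dr => /(_ i 0); rewrite mul_diag_mx !mxE gi eqxx mul1r => ->.
have [z [D D_gt0 zD]] := rat_cV_int_multiple r.
exists z, (D%:~R * t).
  apply: mulf_neq0; first by rewrite intr_eq0 gt_eqF.
  apply: contra_neq r0 => t0.
  by apply/eqP; rewrite -(map_mx_eq0 (@ratr R)) rt t0 scale0r.
apply/matrixP => i j; rewrite (ord1 j) !mxE.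
have := congr1 (@ratr R) (zD i); rewrite !rmorph_int rmorphM rmorph_int => ->.
by move/matrixP: rt => /(_ i 0); rewrite !mxE -mulrA => <-.
Qed.

Lemma supp_intcv g z s : s != 0 -> intcv R z = s *: g ->
  forall i, (z i 0 != 0) = (g i 0 != 0).
Proof.
move=> s0 /matrixP zg i; move: (zg i 0); rewrite !mxE => zgi.
by rewrite -(intr_eq0 R) zgi mulf_eq0 negb_or s0.
Qed.

(* If [intcv w = t *: intcv z], then [w] is itself an integral multiple of [g],
   so its [i0]-coordinate is at least that of [z], which forces [1 <= |t|]. *)
Lemma least_multiple_circuit g z s i0 :
  kerv g -> min_support g -> g i0 0 != 0 -> s != 0 -> intcv R z = s *: g ->
  (forall (w : 'cV[int]_n) t, t != 0 -> intcv R w = t *: g ->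
     (absz (z i0 ord0) <= absz (w i0 ord0))%N) ->
  is_circuit R A z.
Proof.
move=> kg ming gi0 s0 zg zmin; have zE := supp_intcv s0 zg.
split.
- by rewrite zg; apply: kervZ.
- by apply/cV0Pn; exists i0; rewrite zE.
- move=> w kw w0 sub_wz i; rewrite zE => gi.
  have := ming w kw w0 _ i; rewrite !inE; apply => // j; rewrite !inE -zE.
  exact: sub_wz.
move=> w t w0 wt /=.
have t0 : t != 0.
  by apply: contraNneq w0 => t0; rewrite -(intcv_eq0 R) wt t0 scale0r.
have zi0 : 0 < `|(z i0 0)%:~R : R| by rewrite normr_gt0 intr_eq0 zE.
have wi0 : (w i0 0)%:~R = t * (z i0 0)%:~R :> R.
  by move/matrixP: wt => /(_ i0 0); rewrite !mxE.
have wg : intcv R w = (t * s) *: g by rewrite wt zg scalerA.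
have := zmin w _ (mulf_neq0 t0 s0) wg.
rewrite -(ler_nat R) !natr_absz !intr_norm wi0 normrM => le_zw.
by rewrite -(ler_pM2r zi0) mul1r.
Qed.

Lemma min_support_circuit g : kerv g -> g != 0 -> min_support g ->
  exists z s, [/\ is_circuit R A z, 0 < s & intcv R z = s *: g].
Proof.
move=> kg g0 ming; have /cV0Pn [i0 gi0] := g0.
pose P k := exists z s, [/\ s != 0, intcv R z = s *: g & absz (z i0 0) = k].
have [k [[z [s [s0 zg zk]]] kmin]] : exists k, P k /\ forall k', P k' -> (k <= k')%N.
  apply: ex_minn_classic; have [z [s s0 zg]] := min_support_int_multiple kg g0 ming.
  by exists (absz (z i0 0)), z, s.
have zmin (w : 'cV[int]_n) t : t != 0 -> intcv R w = t *: g ->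
    (absz (z i0 ord0) <= absz (w i0 ord0))%N.
  by move=> t0 wg; rewrite zk; apply: kmin; exists w, t.
have [s_lt0|s_gt0|s_eq0] := ltrgtP s 0; last by move: s0; rewrite s_eq0 eqxx.
  have zg' : intcv R (- z) = - s *: g by rewrite intcvN zg scaleNr.
  exists (- z), (- s); split; rewrite ?oppr_gt0 //.
  apply: (least_multiple_circuit kg ming gi0 _ zg'); first by rewrite oppr_eq0.
  by move=> w t t0 wg; rewrite mxE abszN; apply: zmin wg.
by exists z, s; split => //; apply: least_multiple_circuit kg ming gi0 s0 zg zmin.
Qed.

Definition sign_compatible g h := forall i, g i 0 != 0 -> 0 < g i 0 * h i 0.

Lemma sub_scale_sign (a b t : R) : 0 <= t -> (0 < b * a -> t <= a / b) ->
  0 <= (a - t * b) * a.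
Proof.
move=> t_ge0 tmin; have [ba_gt0|] := ltrP 0 (b * a); last by nra.
have b0 : b != 0 by apply: contraTneq ba_gt0 => ->; rewrite mul0r ltxx.
have : t * (b * a) <= a / b * (b * a) by rewrite ler_pM2r // tmin.
by rewrite [in X in _ <= X]mulrA divfK // => ?; nra.
Qed.

Lemma shrink_support g h w :
  kerv g -> sign_compatible g h -> kerv w -> {subset supp w <= supp g} ->
  (exists j, 0 < w j 0 * g j 0) -> (exists i, g i 0 != 0 /\ w i 0 = 0) ->
  exists g', [/\ kerv g', g' != 0, sign_compatible g' h & (#|supp g'| < #|supp g|)%N].
Proof.
move=> kg gh kw sub_wg [j wgj] [i [gi wi]].
case: (arg_minP (P := fun j => 0 < w j 0 * g j 0) (fun j => g j 0 / w j 0) wgj).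
move=> j0 wgj0 j0min; set t := g j0 0 / w j0 0.
have wj0 : w j0 0 != 0 by apply: contraTneq wgj0 => ->; rewrite mul0r ltxx.
have t_gt0 : 0 < t.
  have : t * w j0 0 = g j0 0 by rewrite /t divfK.
  by have := sqr_ge0 (w j0 0); rewrite expr2; nra.
pose g' := g - t *: w.
have g'E l : g' l 0 = g l 0 - t * w l 0 by rewrite !mxE.
have sub_g' : {subset supp g' <= supp g}.
  move=> l; rewrite !inE g'E; apply: contraNneq => gl.
  have /negbNE/eqP -> : ~~ (l \in supp w) by apply/negP => /sub_wg; rewrite inE gl eqxx.
  by rewrite gl mulr0 subrr.
exists g'; split.
- by apply: kervB => //; apply: kervZ.
- by apply/cV0Pn; exists i; rewrite g'E wi mulr0 subr0.
- move=> l g'l; have := sub_g' l; rewrite !inE => /(_ g'l) gl.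
  have : 0 <= g' l 0 * g l 0 by rewrite g'E; apply: sub_scale_sign (ltW t_gt0) (j0min l).
  rewrite le_eqVlt eq_sym mulf_eq0 (negPf g'l) (negPf gl) /= => g'g.
  by have := gh l gl; have := sqr_ge0 (g l 0); rewrite expr2; nra.
- apply: proper_card; apply/properP; split; first by apply/subsetP.
  exists j0; rewrite !inE ?g'E /t ?divfK ?subrr ?eqxx //.
  by apply: contraTneq wgj0 => ->; rewrite mulr0 ltxx.
Qed.

Lemma exists_min_support_compatible h : kerv h -> h != 0 ->
  exists g, [/\ kerv g, g != 0, sign_compatible g h & min_support g].
Proof.
move=> kh h0.
pose P k := exists g, [/\ kerv g, g != 0, sign_compatible g h & #|supp g| = k].
have [k [[g [kg g0 gh gk]] kmin]] : exists k, P k /\ forall k', P k' -> (k <= k')%N.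
  apply: ex_minn_classic; exists #|supp h|, h; split => // i hi.
  by rewrite -expr2 exprn_even_gt0.
exists g; split => // w kw w0 sub_wg i gi; rewrite inE; apply: contraT => /negPn/eqP wi.
have /cV0Pn [j wj] := w0.
have gj : g j 0 != 0 by have := sub_wg j; rewrite !inE; apply.
have [w' [kw' sub_w'g wgj w'i]] : exists w', [/\ kerv w', {subset supp w' <= supp g},
    0 < w' j 0 * g j 0 & w' i 0 = 0].
  have [wg_gt0|wg_lt0|/esym/eqP] := ltrgtP 0 (w j 0 * g j 0).
  - by exists w.
  - exists (- w); split; first exact: kervN.
    + by move=> l; rewrite !inE mxE oppr_eq0; have := sub_wg l; rewrite !inE.
    + by rewrite mxE mulNr oppr_gt0.
    + by rewrite mxE wi oppr0.
  by rewrite mulf_eq0 (negPf wj) (negPf gj).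
have [g' [kg' g'0 g'h lt_g'g]] := shrink_support kg gh kw' sub_w'g (ex_intro _ j wgj)
  (ex_intro _ i (conj gi w'i)).
by have := kmin _ (ex_intro _ g' (And4 kg' g'0 g'h erefl)); rewrite -gk leqNgt lt_g'g.
Qed.

Lemma exists_compatible_circuit h : kerv h -> h != 0 ->
  exists z, is_circuit R A z /\ sign_compatible (intcv R z) h.
Proof.
move=> kh h0; have [g [kg g0 gh ming]] := exists_min_support_compatible kh h0.
have [z [s [cz s_gt0 zg]]] := min_support_circuit kg g0 ming.
exists z; split => // i; rewrite zg mxE => sg0.
rewrite -mulrA pmulr_rgt0 //; apply: gh.
by apply: contraNneq sg0 => ->; rewrite mulr0.
Qed.

Lemma exists_max_conformal_multiple g h : sign_compatible g h -> g != 0 ->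
  exists lam, [/\ 0 < lam, conf_le (lam *: g) h & exists2 i, g i 0 != 0 & h i 0 = lam * g i 0].
Proof.
move=> gh /cV0Pn [i gi].
case: (arg_minP (P := fun i => g i 0 != 0) (fun i => h i 0 / g i 0) gi).
move=> i0 gi0 i0min; set lam := h i0 0 / g i0 0.
have hi0 : h i0 0 = lam * g i0 0 by rewrite /lam divfK.
have lam_gt0 : 0 < lam by have := gh i0 gi0; rewrite hi0; nra.
exists lam; split => //; last by exists i0.
move=> l; rewrite mxE; have [->|gl] := eqVneq (g l 0) 0.
  by rewrite mulr0; case: (lerP 0 (h l 0)) => hl; [left | right]; rewrite lexx ?ltW.
have [q hl] : exists q, h l 0 = q * g l 0 by exists (h l 0 / g l 0); rewrite divfK.
have := i0min l gl; have := gh l gl; rewrite -/lam hl mulfK // => ghl lam_q.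
by case: (ltrP 0 (g l 0)) => gl0; [left | right]; apply/andP; split; nra.
Qed.

Lemma peel_circuit h : kerv h -> h != 0 ->
  exists z lam, [/\ is_circuit R A z, 0 < lam, conf_le (lam *: intcv R z) h
                  & (#|supp (h - lam *: intcv R z)| < #|supp h|)%N].
Proof.
move=> kh h0; have [z [cz zh]] := exists_compatible_circuit kh h0.
have z0 : intcv R z != 0 by case: cz => _; rewrite -(intcv_eq0 R).
have [lam [lam_gt0 lam_le [i zi hi]]] := exists_max_conformal_multiple zh z0.
exists z, lam; split => //.
apply: proper_card; apply/properP; split.
  apply/subsetP => l; rewrite !inE !mxE; apply: contraNneq => hl.
  have : ~~ (0 < intcv R z l 0 * h l 0) by rewrite hl mulr0 ltxx.
  by move/(contra (zh l))/negPn/eqP; rewrite mxE => ->; rewrite mulr0 subr0 hl.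
have h'E : (h - lam *: intcv R z) i 0 = h i 0 - lam * intcv R z i 0 by rewrite !mxE.
by exists i; rewrite !inE ?h'E hi ?subrr ?eqxx // mulf_neq0 // gt_eqF.
Qed.

(* Peel conformal circuits off [h]: its descent ratio is a mediant of those of
   the pieces, hence at most the largest one. *)
Lemma conformal_circuit_ratio (c : 'cV[int]_n) h : kerv h -> h != 0 ->
  exists z lam, [/\ is_circuit R A z, 0 < lam, conf_le (lam *: intcv R z) h
                  & descent_ratio c h <= sd_ratio R c z].
Proof.
move: {2}#|supp h| (leqnn #|supp h|) => N; elim: N h => [|N IH] h le_hN kh h0.
  have /cV0Pn [i hi] := h0; move: le_hN.
  by rewrite leqn0 => /eqP/card0_eq/(_ i); rewrite inE hi.
have [z [lam [cz lam_gt0 lam_le lt_supp]]] := peel_circuit kh h0.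
have ratio_z : sd_ratio R c z = descent_ratio c (lam *: intcv R z) by rewrite descent_ratioZ.
have [h'0|h'0] := eqVneq (h - lam *: intcv R z) 0.
  move/eqP: h'0; rewrite subr_eq0 => /eqP hE.
  by exists z, lam; split; rewrite // ratio_z hE.
have kh' : kerv (h - lam *: intcv R z) by apply: kervB => //; apply/kervZ; case: cz.
have le_h'N : (#|supp (h - lam *: intcv R z)| <= N)%N by rewrite -ltnS (leq_trans lt_supp).
have [z' [lam' [cz' lam'_gt0 lam'_le ratio_h']]] := IH _ le_h'N kh' h'0.
have lamz0 : lam *: intcv R z != 0.
  by rewrite scaler_eq0 negb_or gt_eqF //= (intcv_eq0 R); case: cz.
have [le_h|le_h] := descent_ratio_split c lam_le lamz0 h'0.
  by exists z, lam; split; rewrite // ratio_z.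
exists z', lam'; split => //; last exact: le_trans ratio_h'.
exact: conf_le_trans lam'_le (conf_le_subr lam_le).
Qed.

End Circuits.

Section SteepestDescent.
Variables (R : realFieldType) (d n : nat) (A : 'M[int]_(d, n)) (b : 'cV[int]_d).
Variables (c u : 'cV[int]_n).
Implicit Types (x y v : 'cV[R]_n).

Lemma feasible_conf_step x y v : feasible A b u x -> feasible A b u y ->
  kerv A v -> conf_le v (y - x) -> feasible A b u (x + v).
Proof.
move=> [Ax box_x] [_ box_y] kv v_le; split; first by rewrite mulmxDr Ax kv addr0.
move=> i; move: (box_x i) (box_y i); rewrite !mxE.
by case: (v_le i); rewrite !mxE => /andP [? ?] /andP [? ?] /andP [? ?];
  apply/andP; split; lra.
Qed.

(* [y - x] dominates a conformal circuit direction, which is then feasible at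
   [x] and has a ratio at least that of [y - x]. *)
Lemma steepest_ratio_bound x y (r : R) : feasible A b u x -> feasible A b u y ->
  (forall z, is_circuit R A z -> feas_dir A b u x z -> sd_ratio R c z <= r) ->
  - dotc c (y - x) <= r * norm1 (y - x).
Proof.
move=> fx fy steep; have [->|h0] := eqVneq (y - x) 0.
  by rewrite dotc0 norm1_0 oppr0 mulr0.
have kh : kerv A (y - x).
  by case: fx fy => Ax _ [Ay _]; rewrite /kerv mulmxBr Ax Ay subrr.
have [z [lam [cz lam_gt0 lam_le ratio_le]]] := conformal_circuit_ratio c kh h0.
have fdir : feas_dir A b u x z.
  exists lam; split => //; apply: feasible_conf_step fx fy _ lam_le.
  by apply: kervZ; case: cz.
rewrite descent_ratioP // ler_pM2r ?norm1_gt0 //.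
exact: le_trans ratio_le (steep z cz fdir).
Qed.

(* Steps of the steepest ratio [r] whose sum is feasible make the bound of
   [steepest_ratio_bound] tight, so the triangle inequality for the 1-norm is
   an equality and the steps are conformal. *)
Lemma steepest_steps_conformal x (s : seq 'cV[R]_n) (r : R) :
  feasible A b u x -> feasible A b u (x + \sum_(v <- s) v) ->
  (forall z, is_circuit R A z -> feas_dir A b u x z -> sd_ratio R c z <= r) ->
  0 < r -> (forall v, v \in s -> - dotc c v = r * norm1 v) ->
  forall i v w, v \in s -> w \in s -> 0 <= v i 0 * w i 0.
Proof.
move=> fx fy steep r_gt0 descent; apply: norm1_sum_tight.
have := steepest_ratio_bound fx fy steep.
rewrite addrAC subrr add0r dotc_sum -sumrN (eq_big_seq _ descent) -mulr_sumr.
by rewrite ler_pM2l.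
Qed.

Lemma sd_stops_optimal x : feasible A b u x -> sd_stops A b c u x -> optimal A b c u x.
Proof.
move=> fx stops; split => // y fy.
by have := steepest_ratio_bound fx fy stops; rewrite mul0r dotcB opprB subr_le0.
Qed.

End SteepestDescent.

Section MaximalStep.
Variables (R : realFieldType) (d n : nat) (A : 'M[int]_(d, n)) (b : 'cV[int]_d).
Variable u : 'cV[int]_n.
Implicit Types (x g : 'cV[R]_n).

Definition at_bound g x (i : 'I_n) : bool :=
  (0 < g i 0) && (x i 0 == (u i 0)%:~R) || (g i 0 < 0) && (x i 0 == 0).

Lemma at_bound_neq0 g x i : at_bound g x i -> g i 0 != 0.
Proof. by case/orP => /andP [gi _]; rewrite ?(gt_eqF gi) ?(lt_eqF gi). Qed.

Lemma at_bound_sign g x i (v : R) : at_bound g x i -> 0 <= v <= (u i 0)%:~R ->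
  g i 0 * (v - x i 0) <= 0.
Proof. by case/orP => /andP [gi /eqP ->] /andP [? ?]; nra. Qed.

Definition room (hi v a : R) : R :=
  if 0 < a then (hi - v) / a else if a < 0 then v / - a else 1.

Lemma room_gt0 (hi v a : R) : 0 <= v <= hi ->
  ~~ ((0 < a) && (v == hi) || (a < 0) && (v == 0)) -> 0 < room hi v a.
Proof.
rewrite /room => /andP [v_ge0 v_le] free.
have [a_gt0|a_le0] := ltrP 0 a.
  move: free; rewrite a_gt0 /= negb_or => /andP [vhi _].
  by rewrite divr_gt0 // subr_gt0 lt_def v_le andbT eq_sym.
have [a_lt0|_] := ltrP a 0; last exact: ltr01.
move: free; rewrite a_lt0 ltNge a_le0 /= => v0.
by rewrite divr_gt0 ?oppr_gt0 // lt_def v0 v_ge0.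
Qed.

Lemma room_box (hi v a t : R) : 0 <= v <= hi -> 0 <= t <= room hi v a ->
  0 <= v + t * a <= hi.
Proof.
rewrite /room => /andP [? ?]; have [a_gt0|a_le0] := ltrP 0 a.
  by rewrite ler_pdivlMr // => /andP [? ?]; apply/andP; split; nra.
have [a_lt0|a_ge0] := ltrP a 0.
  by rewrite ler_pdivlMr ?oppr_gt0 // => /andP [? ?]; apply/andP; split; nra.
have -> : a = 0 by apply/eqP; rewrite eq_le a_le0 a_ge0.
by rewrite mulr0 addr0 => _; apply/andP.
Qed.

Lemma max_step_at_bound x g (alpha : R) : kerv A g -> g != 0 ->
  feasible A b u (x + alpha *: g) ->
  (forall beta, feasible A b u (x + beta *: g) -> beta <= alpha) ->
  exists i, at_bound g (x + alpha *: g) i.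
Proof.
move=> kg /cV0Pn [j _] [Ax' box] alpha_max; set x' := x + alpha *: g in Ax' box *.
apply/existsP; apply: contraT => /existsPn free.
pose rm i := room (u i 0)%:~R (x' i 0) (g i 0).
have rm_gt0 i : 0 < rm i by apply: room_gt0 (box i) (free i).
case: (arg_minP (P := predT) rm (isT : predT j)) => i0 _ i0min.
have : feasible A b u (x + (alpha + rm i0) *: g).
  rewrite scalerDl addrA -/x'; split; first by rewrite mulmxDr Ax' -scalemxAr kg scaler0 addr0.
  move=> i; have -> : (x' + rm i0 *: g) i 0 = x' i 0 + rm i0 * g i 0 by rewrite !mxE.
  by apply: room_box (box i) _; rewrite ltW ?i0min.
by move/alpha_max; have := rm_gt0 i0; lra.
Qed.

End MaximalStep.

Section Run.
Variables (R : realFieldType) (d n : nat) (A : 'M[int]_(d, n)) (b : 'cV[int]_d).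
Variables (c u : 'cV[int]_n).

Definition sd_step_with (x x' : 'cV[R]_n) (z : 'cV[int]_n) (alpha : R) :=
  [/\ is_circuit R A z, feas_dir A b u x z,
      (forall z', is_circuit R A z' -> feas_dir A b u x z' ->
         sd_ratio R c z' <= sd_ratio R c z),
      0 < sd_ratio R c z &
      [/\ feasible A b u (x + alpha *: intcv R z),
          (forall beta, feasible A b u (x + beta *: intcv R z) -> beta <= alpha) &
          x' = x + alpha *: intcv R z]].

Lemma sd_stepP x x' : sd_step A b c u x x' -> exists p, sd_step_with x x' p.1 p.2.
Proof. by case=> z [cz fd steep r_gt0 [alpha step]]; exists (z, alpha). Qed.

Variables (x : nat -> 'cV[R]_n) (z : nat -> 'cV[int]_n) (alpha : nat -> R) (K : nat).
Hypothesis x0_feasible : feasible A b u (x 0%N).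
Hypothesis run : forall k, (k < K)%N -> sd_step_with (x k) (x k.+1) (z k) (alpha k).

Local Notation g k := (intcv R (z k)).
Local Notation r k := (sd_ratio R c (z k)).

Lemma run_feasible k : (k <= K)%N -> feasible A b u (x k).
Proof. by elim: k => // k IH /run [_ _ _ _ [f _ ->]]. Qed.

Lemma run_stepE k : (k < K)%N -> x k.+1 - x k = alpha k *: g k.
Proof. by case/run => _ _ _ _ [_ _ ->]; rewrite addrC addKr. Qed.

Lemma run_kerv k : (k < K)%N -> kerv A (g k).
Proof. by case/run => -[]. Qed.

Lemma run_dir_neq0 k : (k < K)%N -> g k != 0.
Proof. by case/run => -[_ z0 _ _]; rewrite (intcv_eq0 R). Qed.

Lemma run_alpha_gt0 k : (k < K)%N -> 0 < alpha k.
Proof.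
by case/run => _ [eps [eps_gt0 f]] _ _ [_ /(_ _ f) eps_le _]; apply: lt_le_trans eps_le.
Qed.

Lemma run_descent k (a : R) : (k < K)%N -> 0 < a ->
  - dotc c (a *: g k) = r k * norm1 (a *: g k).
Proof.
move=> lt_kK a_gt0; rewrite descent_ratioP ?descent_ratioZ //.
by rewrite scaler_eq0 negb_or gt_eqF // run_dir_neq0.
Qed.

Lemma run_at_bound k : (k < K)%N -> exists i, at_bound u (g k) (x k.+1) i.
Proof.
move=> lt_kK; have [_ _ _ _ [f amax xS]] := run lt_kK.
by rewrite xS; apply: max_step_at_bound amax; [apply: run_kerv | apply: run_dir_neq0 |].
Qed.

Lemma run_ratio_nonincreasing k : (k.+1 < K)%N -> r k.+1 <= r k.
Proof.
move=> lt_k1K; have lt_kK := ltnW lt_k1K.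
have [_ [eps [eps_gt0 fy]] _ _ _] := run lt_k1K; have [_ _ steep rk_gt0 _] := run lt_kK.
have := steepest_ratio_bound (run_feasible (ltnW lt_kK)) fy steep.
rewrite addrAC run_stepE // dotcD opprD !run_descent ?run_alpha_gt0 // => le_descent.
have N2_gt0 : 0 < norm1 (eps *: g k.+1).
  by rewrite norm1_gt0 // scaler_eq0 negb_or gt_eqF // run_dir_neq0.
have := ler_wpM2l (ltW rk_gt0) (norm1D (alpha k *: g k) (eps *: g k.+1)).
by rewrite mulrDr => le_norm; rewrite -(ler_pM2r N2_gt0); lra.
Qed.

Lemma run_ratio_monotone k k' : (k <= k')%N -> (k' < K)%N -> r k' <= r k.
Proof.
elim: k' => [|k' IH]; first by rewrite leqn0 => /eqP ->.
rewrite leq_eqVlt ltnS => /orP [/eqP -> //|le_kk'] lt_k'K.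
exact: le_trans (run_ratio_nonincreasing lt_k'K) (IH le_kk' (ltnW lt_k'K)).
Qed.

(* While the ratio is constant, the steps from [x k] on, followed by a feasible
   step at [x k'], are conformal: a coordinate they push to a bound at step [k]
   can move neither further nor back. *)
Lemma run_blocked_coord k k' i : (k < k')%N -> (k' < K)%N -> r k = r k' ->
  at_bound u (g k) (x k.+1) i -> g k' i 0 = 0.
Proof.
move=> lt_kk' lt_k'K eq_r bnd; have lt_kK := ltn_trans lt_kk' lt_k'K.
have r_const j : (k <= j <= k')%N -> r j = r k.
  case/andP=> le_kj le_jk'; apply/eqP; rewrite eq_le run_ratio_monotone //=.
    by rewrite eq_r run_ratio_monotone.
  exact: leq_ltn_trans lt_k'K.
have [_ [eps [eps_gt0 fy]] _ _ _] := run lt_k'K; have [_ _ steep rk_gt0 _] := run lt_kK.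
pose t := rcons [seq x j.+1 - x j | j <- index_iota k.+1 k'] (eps *: g k').
have sum_t : \sum_(v <- t) v = x k' + eps *: g k' - x k.+1.
  by rewrite /t -cats1 big_cat big_map big_seq1 /= telescope_sumr // addrAC.
have descent v : v \in x k.+1 - x k :: t -> - dotc c v = r k * norm1 v.
  rewrite inE /t mem_rcons inE => /or3P [/eqP ->|/eqP ->|/mapP [j]].
  - by rewrite run_stepE // run_descent // run_alpha_gt0.
  - by rewrite run_descent // eq_r.
  rewrite mem_index_iota => /andP [lt_kj lt_jk'] ->.
  have lt_jK := ltn_trans lt_jk' lt_k'K.
  by rewrite run_stepE // run_descent ?run_alpha_gt0 // r_const // (ltnW lt_kj) (ltnW lt_jk').
have fy' : feasible A b u (x k + \sum_(v <- x k.+1 - x k :: t) v).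
  by rewrite big_cons sum_t addrA [x k + _]addrC subrK [x k.+1 + _]addrC subrK.
have conform := steepest_steps_conformal (run_feasible (ltnW lt_kK)) fy' steep rk_gt0 descent.
have sign v : v \in t -> 0 <= g k i 0 * v i 0.
  move=> vt; have vs : v \in x k.+1 - x k :: t by rewrite inE vt orbT.
  have := conform i _ _ (mem_head _ _) vs.
  by rewrite run_stepE // mxE -mulrA pmulr_rge0 // run_alpha_gt0.
have : \sum_(v <- t) g k i 0 * v i 0 <= 0.
  rewrite -mulr_sumr -summxE sum_t [X in _ * X]mxE [X in _ + X]mxE.
  by apply: at_bound_sign bnd _; case: fy => _ /(_ i).
move/(psumr_le0_eq0 sign)/(_ (eps *: g k')); rewrite /t mem_rcons mem_head => /(_ isT)/eqP.
by rewrite mulf_eq0 (negPf (at_bound_neq0 bnd)) mxE mulf_eq0 gt_eqF //= => /eqP.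
Qed.

(* Each step is charged to the pair (its ratio, a coordinate it blocks); by
   [run_blocked_coord] no pair is charged twice. *)
Lemma run_length_le (vals : seq R) :
  (forall k, (k < K)%N -> r k \in vals) -> (K <= n * size vals)%N.
Proof.
move=> r_vals; pose bnd (k : 'I_K) := sval (sigW (run_at_bound (ltn_ord k))).
have bndP (k : 'I_K) : at_bound u (g k) (x k.+1) (bnd k) := svalP (sigW _).
have idx_lt (k : 'I_K) : (index (r k) vals < size vals)%N by rewrite index_mem r_vals.
pose f (k : 'I_K) := (Ordinal (idx_lt k), bnd k).
have f_inj : injective f.
  move=> k1 k2 [e_idx e_bnd].
  have e_r : r k1 = r k2.
    by rewrite -(nth_index 0 (r_vals _ (ltn_ord k1))) e_idx nth_index ?r_vals.
  have [lt|lt|/val_inj //] := ltngtP k1 k2.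
    have := run_blocked_coord lt (ltn_ord k2) e_r (bndP k1).
    by rewrite e_bnd => /eqP; rewrite (negPf (at_bound_neq0 (bndP k2))).
  have := run_blocked_coord lt (ltn_ord k1) (esym e_r) (bndP k2).
  by rewrite -e_bnd => /eqP; rewrite (negPf (at_bound_neq0 (bndP k1))).
by have := leq_card f f_inj; rewrite card_prod !card_ord mulnC.
Qed.

End Run.

Theorem corollary2 (R : realFieldType) (d n : nat)
  (A : 'M[int]_(d, n)) (b : 'cV[int]_d) (c u : 'cV[int]_n)
  (hu : forall i : 'I_n, 0 <= u i 0)
  (m : nat) (vals : seq R)
  (hvals_uniq : uniq vals) (hvals_size : size vals = m)
  (hvals : forall q : R, q \in vals <->
             (0 < q /\ exists z, is_circuit R A z /\ q = sd_ratio R c z))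
  (x : nat -> 'cV[R]_n) (K : nat)
  (hx0 : feasible A b u (x 0%N))
  (hsteps : forall k, (k < K)%N -> sd_step A b c u (x k) (x k.+1)) :
  (K <= n * m)%N /\ (sd_stops A b c u (x K) -> optimal A b c u (x K)).
Proof.
have [p run] : exists p : nat -> 'cV[int]_n * R, forall k, (k < K)%N ->
    sd_step_with A b c u (x k) (x k.+1) (p k).1 (p k).2.
  apply: (IndefiniteDescription.functional_choice
            (fun k q => (k < K)%N -> sd_step_with A b c u (x k) (x k.+1) q.1 q.2)) => k.
  have [/hsteps/sd_stepP [q step]|_] := ltnP k K; first by exists q.
  by exists (0, 0).
split; last exact/sd_stops_optimal/(run_feasible hx0 run).
rewrite -hvals_size; apply: (run_length_le hx0 run) => k lt_kK.
apply/hvals; split; first by case: (run k lt_kK).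
by exists (p k).1; split => //; case: (run k lt_kK).
Qed.
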